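(* For $1\le k\le n-1$, $\ell(w_k)=2k$, and for $1\le j,k\le n-1$ with $j\ne k$, $\ell(w_j\cdot w_k)=\ell(w_j)+\ell(w_k)=2(j+k)$.
   Context: $D_n$ ($n\ge2$) is the Coxeter group with generators $s_{1'},s_1,\dots,s_{n-1}$ and relations $s^2=1$, $(s_i s_{i+1})^3=1$, $(s_is_j)^2=1$ for $|i-j|\ge 2$, $(s_{1'}s_2)^3=1$, $(s_{1'}s_i)^2=1$ for $i\ne 2$. $\ell$ denotes Coxeter length with respect to $\{s_{1'},s_1,\dots,s_{n-1}\}$. $w_k=s_k s_{k-1}\cdots s_2 s_1 s_{1'} s_2\cdots s_k$. *)

(* The Coxeter group D_n is encoded by its presentation:
   elements are words in the generators modulo the congruence generated by
   the Coxeter relations.  Generators are labelled by naturals < n: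
   label 0 = s_{1'}, label i (1 <= i <= n-1) = s_i. *)
From mathcomp Require Import all_boot.
Set Implicit Arguments. Unset Strict Implicit. Unset Printing Implicit Defensive.

Definition coxD_m (a b : nat) : nat :=
  if a == b then 1
  else if (a == 0) then (if b == 2 then 3 else 2)
  else if (b == 0) then (if a == 2 then 3 else 2)
  else if (a == b.+1) || (b == a.+1) then 3 else 2.

Definition altword (a b m : nat) : seq nat := flatten (nseq m [:: a; b]).

Inductive coxD_eq (n : nat) : seq nat -> seq nat -> Prop :=
  | coxD_refl w : coxD_eq n w w
  | coxD_sym u v : coxD_eq n u v -> coxD_eq n v u
  | coxD_trans u v w : coxD_eq n u v -> coxD_eq n v w -> coxD_eq n u w
  | coxD_rel u v a b : a < n -> b < n ->
      coxD_eq n (u ++ altword a b (coxD_m a b) ++ v) (u ++ v).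

Definition coxD_length (n : nat) (w : seq nat) (m : nat) : Prop :=
  (exists w', coxD_eq n w w' /\ size w' = m) /\
  (forall w', coxD_eq n w w' -> m <= size w').

(* w_k = s_k s_{k-1} ... s_2 s_1 s_{1'} s_2 ... s_k *)
Definition wk (k : nat) : seq nat :=
  [seq k - i | i <- iota 0 k] ++ [:: 0] ++ iota 2 k.-1.

From mathcomp Require Import all_boot ssralg ssrnum ssrint zify.
Import GRing.Theory.
Set Implicit Arguments. Unset Strict Implicit. Unset Printing Implicit Defensive.

(* D_n acts on integer sequences of length n by even signed permutations:
   s_i (i >= 1) swaps the entries i-1 and i, and s_{1'} maps (a, b, ...) to
   (-b, -a, ...).  The number of type-D inversions of a sequence x, i.e. of
   pairs p < q with x_q < x_p or x_p + x_q < 0, changes by at most one under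
   each generator, so a word u has minimal length as soon as acting by u
   raises this number by size u.  Now w_k negates the entries 0 and k
   (counting from 0), and negating the entry q of (1, ..., n) creates 2q
   inversions, so w_k and w_j w_k create 2k and 2(j + k) of them. *)

Fixpoint swap_at (i : nat) (l : seq int) : seq int :=
  match i, l with
  | 0, a :: b :: r => b :: a :: r
  | i'.+1, a :: r => a :: swap_at i' r
  | _, _ => l
  end.

Definition flip_head (l : seq int) : seq int :=
  if l is a :: b :: r then (- b)%R :: (- a)%R :: r else l.

Definition gen_act (a : nat) (l : seq int) : seq int :=
  if a is i.+1 then swap_at i l else flip_head l.

Fixpoint act (u : seq nat) (l : seq int) : seq int :=
  if u is a :: u' then gen_act a (act u' l) else l.

Lemma size_swap_at i l : size (swap_at i l) = size l.
Proof. by elim: l i => [|a l IHl] [|i] //=; [case: l {IHl} | rewrite IHl]. Qed.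

Lemma size_flip_head l : size (flip_head l) = size l.
Proof. by case: l => [|a [|b r]]. Qed.

Lemma size_gen_act a l : size (gen_act a l) = size l.
Proof. by case: a => [|i]; [exact: size_flip_head | exact: size_swap_at]. Qed.

Lemma size_act u l : size (act u l) = size l.
Proof. by elim: u => //= a u IHu; rewrite size_gen_act. Qed.

Lemma act_cat u v l : act (u ++ v) l = act u (act v l).
Proof. by elim: u => //= a u ->. Qed.

Lemma swap_atK i : involutive (swap_at i).
Proof. by move=> l; elim: l i => [|a l IHl] [|i] //=; [case: l {IHl} | rewrite IHl]. Qed.

Lemma flip_headK : involutive flip_head.
Proof. by case=> [|a [|b r]] //=; rewrite !opprK. Qed.

Lemma gen_actK a : involutive (gen_act a).
Proof. by case: a => [|i]; [exact: flip_headK | exact: swap_atK]. Qed.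

Lemma swap_atC i j l : i.+1 < j -> swap_at i (swap_at j l) = swap_at j (swap_at i l).
Proof.
elim: i j l => [|i IHi] [|j] l //= lt_ij; first by case: j lt_ij => // j _; case: l => [|a [|b r]].
by case: l => //= a r; rewrite IHi.
Qed.

Lemma swap_at_braid i l : i.+2 < size l ->
  swap_at i (swap_at i.+1 (swap_at i l)) = swap_at i.+1 (swap_at i (swap_at i.+1 l)).
Proof.
elim: i l => [|i IHi] [|a l] //=; first by case: l => [|b [|c r]].
by move=> lt_il; rewrite IHi.
Qed.

Lemma flip_head_swap_at i l : i != 1 -> flip_head (swap_at i l) = swap_at i (flip_head l).
Proof. by case: i => [|[|i]] //; case: l => [|a [|b r]]. Qed.

Lemma flip_head_braid l : 2 < size l ->
  flip_head (swap_at 1 (flip_head l)) = swap_at 1 (flip_head (swap_at 1 l)).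
Proof. by case: l => [|a [|b [|c r]]] //= _; rewrite opprK. Qed.

Lemma coxD_mC a b : coxD_m a b = coxD_m b a.
Proof. by rewrite /coxD_m eq_sym; case: a b => [|[|[|a]]] [|[|[|b]]] //=; rewrite orbC. Qed.

Lemma gen_actC a b l : coxD_m a b = 2 -> gen_act a (gen_act b l) = gen_act b (gen_act a l).
Proof.
wlog le_ab : a b / a <= b => [hw|].
  by case/orP: (leq_total a b) => [/hw//|le_ba]; rewrite coxD_mC => /(hw _ _ le_ba).
rewrite /coxD_m; case: a b le_ab => [|a] [|b] //= le_ab.
  by case: eqP => // /eqP ne_b1 _; apply: flip_head_swap_at.
case: eqP => // ne_ab; case: ifP => // /norP[_ /eqP ne_ba] _.
by rewrite swap_atC //; lia.
Qed.

Lemma gen_act_braid a b l : coxD_m a b = 3 -> maxn a b < size l ->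
  gen_act a (gen_act b (gen_act a l)) = gen_act b (gen_act a (gen_act b l)).
Proof.
wlog le_ab : a b / a <= b => [hw|].
  case/orP: (leq_total a b) => [/hw//|le_ba]; rewrite coxD_mC maxnC => m_ba lt_l.
  by rewrite (hw _ _ le_ba).
rewrite /coxD_m (maxn_idPr le_ab); case: a b le_ab => [|a] [|b] //= le_ab.
  by case: eqP => // -[->] _; apply: flip_head_braid.
rewrite !eqSS; case: eqP => // _; case: ifP => // /orP[/eqP ab | /eqP ->] _; first lia.
exact: swap_at_braid.
Qed.

Lemma act_altword a b m l :
  act (altword a b m) l = iter m (fun l => gen_act a (gen_act b l)) l.
Proof. by elim: m => //= m <-. Qed.

Lemma act_altword_coxD_m a b l : maxn a b < size l ->
  act (altword a b (coxD_m a b)) l = l.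
Proof.
move=> lt_l; rewrite act_altword.
have [<-|neq_ab] := eqVneq a b; first by rewrite /coxD_m eqxx /= gen_actK.
have : coxD_m a b \in [:: 2; 3] by rewrite /coxD_m (negbTE neq_ab); repeat case: ifP.
rewrite !inE => /orP[/eqP m_ab | /eqP m_ab].
- by rewrite m_ab /= gen_actC // (gen_actK a) gen_actK.
- by rewrite m_ab /= gen_act_braid ?size_gen_act // (gen_actK b) (gen_actK a) gen_actK.
Qed.

Lemma coxD_eq_act n u v l : coxD_eq n u v -> size l = n -> act u l = act v l.
Proof.
move=> eq_uv; elim: eq_uv l => {u v} [//|u v _ IH|u v w _ IH1 _ IH2|u v a b lt_a lt_b] l size_l.
- by rewrite IH.
- by rewrite IH1 // IH2.
- by rewrite !act_cat act_altword_coxD_m // size_act size_l gtn_max lt_a.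
Qed.

Definition dinv (a b : int) : nat := (b < a)%R + (a + b < 0)%R.

Definition dinv_row (a : int) (l : seq int) : nat := sumn [seq dinv a b | b <- l].

Fixpoint dinv_count (l : seq int) : nat :=
  if l is a :: r then dinv_row a r + dinv_count r else 0.

Lemma dinvC_le a b : dinv b a <= dinv a b + 1.
Proof. rewrite /dinv; lia. Qed.

Lemma dinvNl a b : dinv (- a) b = dinv a b.
Proof. rewrite /dinv; lia. Qed.

Lemma dinvNC_le a b : dinv (- b) (- a) <= dinv a b + 1.
Proof. rewrite /dinv; lia. Qed.

Lemma dinv_dominated a b : absz a < absz b -> dinv a b = 2 * (b < 0)%R.
Proof. rewrite /dinv; lia. Qed.

Lemma dinv_rowNl a l : dinv_row (- a) l = dinv_row a l.
Proof. by rewrite /dinv_row; under eq_map => b do rewrite dinvNl. Qed.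

Lemma dinv_row_swap_at a i l : dinv_row a (swap_at i l) = dinv_row a l.
Proof.
rewrite /dinv_row; apply: perm_sumn; apply: perm_map.
elim: l i => [|b l IHl] [|i] //=; last by rewrite perm_cons.
by case: l {IHl} => [|c r] //; apply/permP => p /=; rewrite addnCA.
Qed.

Lemma dinv_count_swap_at i l : dinv_count (swap_at i l) <= dinv_count l + 1.
Proof.
elim: l i => [|a l IHl] [|i] //=; last by rewrite dinv_row_swap_at; have := IHl i; lia.
case: l {IHl} => [|b r] //=; rewrite /dinv_row /= -!/(dinv_row _ r).
by have := dinvC_le a b; lia.
Qed.

Lemma dinv_count_flip_head l : dinv_count (flip_head l) <= dinv_count l + 1.
Proof.
case: l => [|a [|b r]] //=; rewrite /dinv_row /= -!/(dinv_row _ r) !dinv_rowNl.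
by have := dinvNC_le a b; lia.
Qed.

Lemma dinv_count_gen_act a l : dinv_count (gen_act a l) <= dinv_count l + 1.
Proof. by case: a => [|i]; [exact: dinv_count_flip_head | exact: dinv_count_swap_at]. Qed.

Lemma dinv_count_act u l : dinv_count (act u l) <= size u + dinv_count l.
Proof. by elim: u => //= a u IHu; have := dinv_count_gen_act a (act u l); lia. Qed.

Lemma coxD_length_of_dinv_count n u l : size l = n ->
  dinv_count (act u l) = size u + dinv_count l -> coxD_length n u (size u).
Proof.
move=> size_l dinv_u; split; first by exists u; split; first exact: coxD_refl.
move=> w eq_uw; have := dinv_count_act w l.
by rewrite -(coxD_eq_act eq_uw size_l) dinv_u leq_add2r.
Qed.

Lemma dinv_count_rcons l x :
  dinv_count (rcons l x) = dinv_count l + sumn [seq dinv a x | a <- l].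
Proof. by elim: l => //= a l ->; rewrite /dinv_row map_rcons sumn_rcons; lia. Qed.

Lemma sumn_dinv_dominated l x : (forall a, a \in l -> absz a < absz x) ->
  sumn [seq dinv a x | a <- l] = 2 * (x < 0)%R * size l.
Proof.
elim: l => [|a l IHl] lt_lx /=; first by rewrite muln0.
rewrite dinv_dominated ?lt_lx ?mem_head // IHl => [|b l_b]; first by rewrite mulnS.
by apply: lt_lx; rewrite in_cons l_b orbT.
Qed.

Definition signed_iota (sg : nat -> bool) (n : nat) : seq int :=
  mkseq (fun i => if sg i then - i.+1%:Z else i.+1%:Z)%R n.

Lemma dinv_count_signed_iota sg n :
  dinv_count (signed_iota sg n) = 2 * \sum_(0 <= i < n | sg i) i.
Proof.
elim: n => [|n IHn]; first by rewrite big_geq.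
rewrite /signed_iota mkseqS dinv_count_rcons -/(signed_iota sg n) IHn.
rewrite sumn_dinv_dominated ?size_mkseq => [|a /mapP[i]]; last first.
  by rewrite mem_iota => /andP[_ lt_in] ->; case: (sg i); case: (sg n) => /=; lia.
by rewrite [in RHS]big_mkcond big_nat_recr //= -big_mkcond; case: (sg n) => /=; lia.
Qed.

Lemma sum_pred2_xor n j k : j != k -> j < n -> k < n ->
  \sum_(0 <= i < n | (i == j) (+) (i == k)) i = j + k.
Proof.
move=> neq_jk lt_jn lt_kn.
rewrite big_mkcond (eq_bigr (fun i => (if i == j then i else 0) + (if i == k then i else 0))).
  by rewrite big_split -!big_mkcond !big_nat1_eq /= lt_jn lt_kn.
by move=> i _; do 2 case: eqP => /=; lia.
Qed.

Fixpoint neg_at (i : nat) (l : seq int) : seq int :=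
  match i, l with
  | _, [::] => [::]
  | 0, a :: r => (- a)%R :: r
  | i'.+1, a :: r => a :: neg_at i' r
  end.

Lemma size_neg_at i l : size (neg_at i l) = size l.
Proof. by elim: l i => [|a l IHl] [|i] //=; rewrite IHl. Qed.

Lemma nth_neg_at i l q :
  nth 0%R (neg_at i l) q = if q == i then (- nth 0 l q)%R else nth 0%R l q.
Proof. by elim: l i q => [|a l IHl] [|i] [|q] //=; rewrite ?IHl ?oppr0 ?if_same. Qed.

Lemma neg_atC i j l : neg_at i (neg_at j l) = neg_at j (neg_at i l).
Proof. by elim: l i j => [|a l IHl] [|i] [|j] //=; rewrite IHl. Qed.

Lemma neg_atK i : involutive (neg_at i).
Proof. by move=> l; elim: l i => [|a l IHl] [|i] //=; rewrite ?opprK ?IHl. Qed.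

Lemma neg_at_signed_iota i sg n :
  neg_at i (signed_iota sg n) = signed_iota (fun q => sg q (+) (q == i)) n.
Proof.
apply: (@eq_from_nth _ 0%R); rewrite size_neg_at !size_mkseq // => q lt_qn.
rewrite nth_neg_at !nth_mkseq //.
by case: (sg q); case: (q == i); rewrite ?opprK.
Qed.

Lemma swap_at_neg_at0 i l : 0 < i -> swap_at i (neg_at 0 l) = neg_at 0 (swap_at i l).
Proof. by case: i => // i _; case: l. Qed.

Lemma swap_at_neg_at i l : i.+1 < size l ->
  swap_at i (neg_at i (swap_at i l)) = neg_at i.+1 l.
Proof.
elim: i l => [|i IHi] [|a l] //=; first by case: l => [|b r].
by move=> lt_il; rewrite IHi.
Qed.

Lemma wkS k : 0 < k -> wk k.+1 = k.+1 :: wk k ++ [:: k.+1].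
Proof.
case: k => // k _; rewrite /wk.
have -> : [seq k.+2 - i | i <- iota 0 k.+2] = k.+2 :: [seq k.+1 - i | i <- iota 0 k.+1].
  have -> : iota 0 k.+2 = 0 :: map succn (iota 0 k.+1) by rewrite -(iotaDl 1 0).
  by rewrite /= -map_comp subn0; congr (_ :: _); apply: eq_map.
have -> : iota 2 k.+1 = iota 2 k ++ [:: k.+2] by have := iotaD 2 k 1; rewrite addn1.
by rewrite !catA.
Qed.

Lemma size_wk k : 0 < k -> size (wk k) = 2 * k.
Proof. by rewrite /wk !size_cat size_map !size_iota /=; lia. Qed.

Lemma act_wk k l : 0 < k < size l -> act (wk k) l = neg_at 0 (neg_at k l).
Proof.
elim: k l => [|k IHk] l //; case: k IHk => [_|k IHk] /andP[_ lt_kl].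
  by case: l lt_kl => [|a [|b r]].
rewrite wkS // -cat1s act_cat (act_cat (wk k.+1)) IHk; last by rewrite size_act; lia.
change (swap_at k.+1 (neg_at 0 (neg_at k.+1 (swap_at k.+1 l))) = neg_at 0 (neg_at k.+2 l)).
by rewrite swap_at_neg_at0 // swap_at_neg_at.
Qed.

Lemma dinv_count_neg_at2 n j k : j != k -> j < n -> k < n ->
  dinv_count (neg_at j (neg_at k (signed_iota xpred0 n))) = 2 * (j + k).
Proof.
move=> neq_jk lt_jn lt_kn; rewrite !neg_at_signed_iota dinv_count_signed_iota /=.
by rewrite sum_pred2_xor 1?eq_sym // addnC.
Qed.

Theorem mainTheorem11 (n : nat) (hn : 2 <= n) :
  (forall k, 1 <= k <= n.-1 -> coxD_length n (wk k) (2 * k)) /\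
  (forall j k, 1 <= j <= n.-1 -> 1 <= k <= n.-1 -> j != k ->
     exists lj lk,
       [/\ coxD_length n (wk j) lj, coxD_length n (wk k) lk,
           coxD_length n (wk j ++ wk k) (lj + lk) & lj + lk = 2 * (j + k)]).
Proof.
pose e := signed_iota xpred0 n.
have size_e : size e = n by rewrite size_mkseq.
have dinv_e : dinv_count e = 0 by rewrite dinv_count_signed_iota big_pred0.
have len_wk k : 1 <= k <= n.-1 -> coxD_length n (wk k) (2 * k).
  move=> /andP[k_gt0 k_lt]; rewrite -size_wk //.
  apply: (coxD_length_of_dinv_count size_e).
  rewrite act_wk; last by rewrite size_e; lia.
  by rewrite /e dinv_count_neg_at2 ?size_wk ?dinv_e //; lia.
split=> [//|j k j_range k_range neq_jk].
exists (2 * j), (2 * k); split; [exact: len_wk | exact: len_wk | | by rewrite mulnDr].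
move: j_range k_range => /andP[j_gt0 j_lt] /andP[k_gt0 k_lt].
rewrite -!size_wk // -size_cat; apply: (coxD_length_of_dinv_count size_e).
rewrite act_cat act_wk; last by rewrite size_act size_e; lia.
rewrite act_wk; last by rewrite size_e; lia.
rewrite (neg_atC j 0) neg_atK /e dinv_count_neg_at2 ?(size_cat (wk j)) ?size_wk ?dinv_e //; lia.
Qed.
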